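(* Let $p,q\ge 1$ be integers, $C$ a finite set, and $M\in\mathcal M(p,q,C)$. Let $\gamma\in C$ be a colour of frequency $l$ in $M$. Then: (1) $l\le\min(p,q)$; (2) $\operatorname{exc}(\gamma)\ge 0$; (3) if $l=\operatorname{frq}(M)$, then $|C|\le\lfloor pq/l\rfloor$.
   Context: $\mathcal M(p,q,C)$ is the set of $p\times q$ matrices $M$ with entries from $C$ such that each row of $M$ has $q$ pairwise distinct entries, each column has $p$ pairwise distinct entries, and every pair $\{\alpha,\beta\}$ of distinct colours of $C$ is good: there is a row or a column of $M$ containing both $\alpha$ and $\beta$. The frequency $\operatorname{frq}(\gamma)$ of $\gamma\in C$ is the number of entries of $M$ equal to $\gamma$, and $\operatorname{frq}(M)$ is the minimum frequency over all colours of $C$. The excess of a colour $\gamma$ of frequency $l$ is $\operatorname{exc}(\gamma)=l(p+q-l-1)-(|C|-1)$. *)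

From mathcomp Require Import all_boot all_order all_algebra.
Set Implicit Arguments. Unset Strict Implicit. Unset Printing Implicit Defensive.

Definition rows_distinct (C : finType) p q (M : 'M[C]_(p, q)) : Prop :=
  forall i : 'I_p, injective (fun j : 'I_q => M i j).

Definition cols_distinct (C : finType) p q (M : 'M[C]_(p, q)) : Prop :=
  forall j : 'I_q, injective (fun i : 'I_p => M i j).

Definition good_pair (C : finType) p q (M : 'M[C]_(p, q)) (a b : C) : Prop :=
  (exists i : 'I_p, (exists j : 'I_q, M i j = a) /\ (exists j : 'I_q, M i j = b)) \/
  (exists j : 'I_q, (exists i : 'I_p, M i j = a) /\ (exists i : 'I_p, M i j = b)).

Definition inMpqC (C : finType) p q (M : 'M[C]_(p, q)) : Prop :=
  rows_distinct M /\ cols_distinct M /\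
  (forall a b : C, a <> b -> good_pair M a b).

Definition frq (C : finType) p q (M : 'M[C]_(p, q)) (g : C) : nat :=
  #|[set ij : 'I_p * 'I_q | M ij.1 ij.2 == g]|.

(* frq(M): minimum frequency over all colours of C
   (the neutral element p*q is irrelevant, since every frequency is <= p*q
   and C is nonempty whenever p,q >= 1) *)
Definition frqM (C : finType) p q (M : 'M[C]_(p, q)) : nat :=
  \big[minn/(p * q)%N]_(c : C) frq M c.

Definition exc (C : finType) p q (M : 'M[C]_(p, q)) (g : C) : int :=
  let l := frq M g in
  ((l%:Z * (p%:Z + q%:Z - l%:Z - 1) - (#|C|%:Z - 1))%R).

(* The cells of colour g lie in pairwise distinct rows and pairwise distinct
   columns, so g meets exactly l rows and l columns, whence l <= min(p, q).
   Every other colour forms a good pair with g, hence occurs in one of these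
   rows or columns, off the l cells of g; their union has pq - (p-l)(q-l)
   cells, which gives |C| - 1 <= l(p+q-l-1).  Finally the frequencies add up
   to pq and all of them are at least frq(M), so |C| frq(M) <= pq. *)

From mathcomp Require Import all_boot all_order all_algebra.
From mathcomp Require Import zify.
Import Order.TTheory.

Lemma sum_card_fibers {T R : finType} (f : T -> R) :
  \sum_(y : R) #|[set x | f x == y]| = #|T|.
Proof.
under eq_bigr => y _ do rewrite -sum1dep_card big_mkcond /=.
rewrite exchange_big /= -sum1_card; apply: eq_bigr => x _.
by rewrite -big_mkcond /= (big_pred1 (f x)).
Qed.

Section ColourClasses.

Variables (C : finType) (p q : nat) (M : 'M[C]_(p, q)).

Definition cells (g : C) := [set ij : 'I_p * 'I_q | M ij.1 ij.2 == g].
Definition rows_of (g : C) := [set ij.1 | ij in cells g].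
Definition cols_of (g : C) := [set ij.2 | ij in cells g].
Definition cross (g : C) :=
  [set ij : 'I_p * 'I_q | (ij.1 \in rows_of g) || (ij.2 \in cols_of g)].

Lemma sum_frq : \sum_(c : C) frq M c = p * q.
Proof.
by rewrite (sum_card_fibers (fun ij : 'I_p * 'I_q => M ij.1 ij.2)) card_prod !card_ord.
Qed.

Lemma frqM_le_frq c : frqM M <= frq M c.
Proof. by rewrite /frqM -minEnat -leEnat; exact: bigmin_le. Qed.

Lemma cells_sub_cross g : cells g \subset cross g.
Proof.
apply/subsetP => -[i j] gij; rewrite inE /=; apply/orP; left.
by apply/imsetP; exists (i, j).
Qed.

Hypothesis rowsM : rows_distinct M.
Hypothesis colsM : cols_distinct M.

Lemma card_rows_of g : #|rows_of g| = frq M g.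
Proof.
apply: card_in_imset => -[i j] [i' j']; rewrite !inE /= => /eqP h /eqP h' ei.
by subst i'; congr pair; apply: (rowsM i); rewrite /= h h'.
Qed.

Lemma card_cols_of g : #|cols_of g| = frq M g.
Proof.
apply: card_in_imset => -[i j] [i' j']; rewrite !inE /= => /eqP h /eqP h' ej.
by subst j'; congr pair; apply: (colsM j); rewrite /= h h'.
Qed.

Lemma frq_le_minn g : frq M g <= minn p q.
Proof.
have := max_card (mem (rows_of g)); have := max_card (mem (cols_of g)).
by rewrite card_rows_of card_cols_of !card_ord leq_min => -> ->.
Qed.

Lemma card_cross g :
  #|cross g| + (p - frq M g) * (q - frq M g) = p * q.
Proof.
have crossC : ~: cross g = setX (~: rows_of g) (~: cols_of g).
  by apply/setP => -[i j]; rewrite !inE negb_or.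
have := cardsC (cross g); rewrite crossC cardsX card_prod !card_ord.
have := cardsC (rows_of g); have := cardsC (cols_of g).
by rewrite !card_ord card_rows_of card_cols_of; lia.
Qed.

Hypothesis goodM : forall a b : C, a <> b -> good_pair M a b.

Lemma colours_in_cross g :
  [set: C] :\ g \subset [set M ij.1 ij.2 | ij in cross g :\: cells g].
Proof.
apply/subsetP => a; rewrite !inE andbT => ag.
have [[i [[j aij] [j' gij']]] | [j [[i aij] [i' gi'j]]]] := goodM _ _ (elimN eqP ag).
- apply/imsetP; exists (i, j) => //; rewrite !inE /= aij ag /=.
  by apply/orP; left; apply/imsetP; exists (i, j'); rewrite // inE /= gij'.
- apply/imsetP; exists (i, j) => //; rewrite !inE /= aij ag /=.
  by apply/orP; right; apply/imsetP; exists (i', j); rewrite // inE /= gi'j.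
Qed.

Lemma card_colours_le g :
  #|C| - 1 <= frq M g * (p + q - frq M g - 1).
Proof.
have /andP[lp lq] : (frq M g <= p) && (frq M g <= q) by rewrite -leq_min frq_le_minn.
have crossE := card_cross g.
have splitE : frq M g + #|cross g :\: cells g| = #|cross g|.
  by rewrite -(cardsID (cells g) (cross g)) (setIidPr (cells_sub_cross g)).
have colours : #|C| - 1 <= #|cross g :\: cells g|.
  rewrite -cardsT (cardsD1 g) inE add1n subn1 /=.
  exact: leq_trans (subset_leq_card (colours_in_cross g)) (leq_imset_card _ _).
nia.
Qed.

Lemma exc_ge0 g : (0 <= exc M g)%R.
Proof.
have := card_colours_le g; have := frq_le_minn g.
have : 0 < #|C| by apply/card_gt0P; exists g.
rewrite /exc leq_min => C_gt0 /andP[lp lq]; nia.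
Qed.

Lemma frq_gt0 g : 0 < p -> 0 < q -> 0 < frq M g.
Proof.
move=> p_gt0 q_gt0; apply/card_gt0P.
pose i0 : 'I_p := Ordinal p_gt0; pose j0 : 'I_q := Ordinal q_gt0.
have [e|ne] := eqVneq (M i0 j0) g; first by exists (i0, j0); rewrite inE /= e.
have [[i [_ [j gij]]] | [j [_ [i gij]]]] := goodM _ _ (elimN eqP ne).
  by exists (i, j); rewrite inE /= gij.
by exists (i, j); rewrite inE /= gij.
Qed.

Lemma card_colours_le_div g : 0 < p -> 0 < q ->
  frq M g = frqM M -> #|C| <= p * q %/ frq M g.
Proof.
move=> p_gt0 q_gt0 g_min; rewrite leq_divRL ?frq_gt0 // -sum_frq -sum_nat_const.
by apply: leq_sum => c _; rewrite g_min frqM_le_frq.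
Qed.

End ColourClasses.

Theorem lemma1 (p q : nat) (C : finType) (M : 'M[C]_(p, q)) (g : C) :
  (1 <= p)%N -> (1 <= q)%N -> inMpqC M ->
  [/\ (frq M g <= minn p q)%N,
      (0 <= exc M g)%R
    & frq M g = frqM M -> (#|C| <= (p * q) %/ frq M g)%N].
Proof.
move=> p_gt0 q_gt0 [rowsM [colsM goodM]]; split.
- exact: frq_le_minn.
- exact: exc_ge0.
- exact: card_colours_le_div.
Qed.
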